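(* Let $\hat{\mathcal D}$ be a marked DAG over $X$, $\kappa>0$, $q\in\mathcal Q_{\mathcal D}$, $c\in\mathbb R_+^X$, $p=\mathcal A(q,c)$ with associated values $\hat c_v$ ($v\in V$), and $Q=\Lambda(q)$. Then $$\sum_{uv\in A}\eta_{uv}Q_{uv}\hat c_v\le\big(\Delta_0(\mathcal D)+\Delta_I(\hat{\mathcal D})\big)\sum_{x\in X}c_xQ_x.$$
   Context: Let $X$ be a finite set. A DAG over $X$ is a finite directed acyclic graph $\mathcal D=(V,A)$ with $X\subseteq V$, a single source $r$, whose set of sinks is exactly $X$. A flow is $F\in\mathbb R_+^A$ with $\sum_{v:uv\in A}F_{uv}=\sum_{v:vu\in A}F_{vu}$ for $u\in V\setminus(X\cup\{r\})$; $F_u:=\sum_{v:uv\in A}F_{uv}$ for $u\notin X$, $F_x:=\sum_{u:ux\in A}F_{ux}$ for $x\in X$; unit flows have $F_r=1$. $\mathcal P_{\mathcal D}$ is the set of directed paths from $r$ to a sink. A marked DAG is $(\mathcal D,\omega,\theta)$ with $\omega\in\mathbb R_{>0}^A$, $\omega_{uv}>\omega_{vw}$ whenever $uv,vw\in A$, and $\theta\in\mathbb R_{>0}^A$ with $\sum_{v:uv\in A}\theta_{uv}=1$ for $u\in V\setminus X$. $\theta(\gamma):=\prod_{uv\in\gamma}\theta_{uv}$; $\Delta_0(\mathcal D)$ is the maximal number of arcs of a path in $\mathcal P_{\mathcal D}$, $\Delta_I(\hat{\mathcal D}):=\max_{\gamma\in\mathcal P_{\mathcal D}}\log(1/\theta(\gamma))$.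 Put $\eta_{uv}:=1+\log(1/\theta_{uv})$, $\delta_{uv}:=\theta_{uv}/\eta_{uv}$. $\mathcal Q_{\mathcal D}:=\{p\in\mathbb R_+^A:\sum_{v:uv\in A}p_{uv}=1\ \forall u\in V\setminus X\}$; $q^{(u)}:=(q_{uv})_{v:uv\in A}$; $\mathcal Q^{(u)}$ is the probability simplex on $\{v:uv\in A\}$; $\mathbb D^{(u)}(p\|p'):=\frac1\kappa\sum_{v:uv\in A}\frac{\omega_{uv}}{\eta_{uv}}\big[(p_v+\delta_{uv})\log\frac{p_v+\delta_{uv}}{p'_v+\delta_{uv}}+p'_v-p_v\big]$. The step map $\mathcal A(q,c)$ outputs $p\in\mathcal Q_{\mathcal D}$: set $\hat c_x:=c_x$ for $x\in X$; process $u\in V\setminus X$ so that each vertex comes after all its out-neighbours, setting $p^{(u)}:=\arg\min_{p'\in\mathcal Q^{(u)}}\{\mathbb D^{(u)}(p'\|q^{(u)})+\sum_vp'_v\hat c_v\}$ and $\hat c_u:=\sum_vp^{(u)}_v\hat c_v$. $\Lambda(q)$ is the unique unit flow $F$ with $F_{uv}=F_uq_{uv}$ for all $uv\in A$. *)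

From HB Require Import structures.
From mathcomp Require Import all_boot all_order all_algebra.
From mathcomp Require Import all_classical all_reals all_analysis.
Set Implicit Arguments. Unset Strict Implicit. Unset Printing Implicit Defensive.
Import Order.TTheory GRing.Theory Num.Theory.
Local Open Scope ring_scope.

(* A finite directed graph: vertex set V (a finType), arc relation E.
   Arc-indexed real vectors are represented as functions V -> V -> R;
   only their values on arcs (E u v) ever matter. *)

Section Defs.
Variables (R : realType) (V : finType) (E : rel V) (X : {set V}) (r : V).

Definition is_dag_over : Prop :=
  [/\ (forall u v, E u v -> ~~ connect E v u),
      (forall v, [forall u, ~~ E u v] = (v == r))
    & (forall v, (v \in X) = [forall w, ~~ E v w])].

Definition is_marking (omega theta : V -> V -> R) : Prop :=
  [/\ (forall u v, E u v -> 0 < omega u v),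
      (forall u v w, E u v -> E v w -> omega v w < omega u v),
      (forall u v, E u v -> 0 < theta u v)
    & (forall u, u \notin X -> \sum_(v | E u v) theta u v = 1)].

Definition in_QD (q : V -> V -> R) : Prop :=
  (forall u v, E u v -> 0 <= q u v) /\
  (forall u, u \notin X -> \sum_(v | E u v) q u v = 1).

Definition flow_at (F : V -> V -> R) (u : V) : R :=
  if u \in X then \sum_(w | E w u) F w u else \sum_(v | E u v) F u v.

Definition is_flow (F : V -> V -> R) : Prop :=
  (forall u v, E u v -> 0 <= F u v) /\
  (forall u, u \notin X -> u != r ->
     \sum_(v | E u v) F u v = \sum_(v | E v u) F v u).

Definition is_unit_flow (F : V -> V -> R) : Prop :=
  is_flow F /\ flow_at F r = 1.

Definition is_Lambda (q F : V -> V -> R) : Prop :=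
  is_unit_flow F /\ (forall u v, E u v -> F u v = flow_at F u * q u v).

(* paths in P_D: r :: s, a directed path from r ending at a sink *)
Definition rpath (s : seq V) : bool := path E r s && (last r s \in X).

Definition path_arcs (s : seq V) : seq (V * V) := zip (r :: s) s.

Definition theta_path (theta : V -> V -> R) (s : seq V) : R :=
  \prod_(a <- path_arcs s) theta a.1 a.2.

Definition Delta0 : R :=
  sup [set x : R | exists s, rpath s /\ x = (size s)%:R].

Definition DeltaI (theta : V -> V -> R) : R :=
  sup [set x : R | exists s, rpath s /\ x = ln (1 / theta_path theta s)].

Definition etaD (theta : V -> V -> R) (u v : V) : R := 1 + ln (1 / theta u v).
Definition deltaD (theta : V -> V -> R) (u v : V) : R := theta u v / etaD theta u v.

Definition in_simplex (u : V) (p : V -> R) : Prop :=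
  (forall v, E u v -> 0 <= p v) /\ \sum_(v | E u v) p v = 1.

Definition Du (kappa : R) (omega theta : V -> V -> R) (u : V) (p p' : V -> R) : R :=
  kappa^-1 * \sum_(v | E u v) (omega u v / etaD theta u v) *
    ((p v + deltaD theta u v) * ln ((p v + deltaD theta u v) / (p' v + deltaD theta u v))
      + p' v - p v).

Definition step_obj (kappa : R) (omega theta : V -> V -> R) (u : V)
    (q : V -> V -> R) (chat : V -> R) (p' : V -> R) : R :=
  Du kappa omega theta u p' (q u) + \sum_(v | E u v) p' v * chat v.

Definition is_step (kappa : R) (omega theta : V -> V -> R) (q : V -> V -> R)
    (c : V -> R) (p : V -> V -> R) (chat : V -> R) : Prop :=
  (forall x, x \in X -> chat x = c x) /\
  (forall u, u \notin X ->
     [/\ in_simplex u (p u),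
         (forall p' : V -> R, in_simplex u p' ->
            step_obj kappa omega theta u q chat (p u) <=
            step_obj kappa omega theta u q chat p')
       & chat u = \sum_(v | E u v) p u v * chat v]).

End Defs.

From HB Require Import structures.
From mathcomp Require Import all_boot all_order all_algebra.
From mathcomp Require Import all_classical all_reals all_analysis.
From mathcomp Require Import lra.
Import Order.TTheory GRing.Theory Num.Theory.
Local Open Scope ring_scope.
Set Implicit Arguments. Unset Strict Implicit.

(* Let H v be the largest eta-length of a path from r to v.  The eta-length of
   a path from r to a sink is its number of arcs plus log (1/theta(gamma)), so
   H <= Delta0 + DeltaI on X, and eta_uv <= H v - H u on every arc.
   Comparing the step objective at p^(u) with its value at q^(u), where the
   divergence vanishes, gives chat_u <= sum_v q_uv chat_v; hence the flow
   G_uv := Q_uv chat_v leaves each inner vertex at least as fast as it enters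
   it.  Summing eta_uv Q_uv chat_v <= (H v - H u) G_uv over the arcs and
   telescoping, only the sinks survive, with total at most
   (Delta0 + DeltaI) sum_x c_x Q_x. *)

Section Dag.
Variables (V : finType) (E : rel V) (X : {set V}) (r : V).
Hypothesis acyclic : forall u v, E u v -> ~~ connect E v u.
Hypothesis source_r : forall v, [forall u, ~~ E u v] = (v == r).
Hypothesis sinks_X : forall v, (v \in X) = [forall w, ~~ E v w].

Lemma arc_notin_sinks u v : E u v -> u \notin X.
Proof. by move=> huv; rewrite sinks_X negb_forall; apply/existsP; exists v; rewrite huv. Qed.

Lemma source_no_arc u : ~~ E u r.
Proof. by have /forallP := source_r r; rewrite eqxx; apply. Qed.

Definition ndesc v := #|[set w | connect E v w]|.
Definition nanc v := #|[set w | connect E w v]|.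

Lemma ndesc_arc u v : E u v -> (ndesc v < ndesc u)%N.
Proof.
move=> huv; apply: proper_card; apply/properP; split.
  by apply/fintype.subsetP => w; rewrite !inE; apply: connect_trans (connect1 huv).
by exists u; rewrite !inE ?connect0 // (negbTE (acyclic huv)).
Qed.

Lemma nanc_arc u v : E u v -> (nanc u < nanc v)%N.
Proof.
move=> huv; apply: proper_card; apply/properP; split.
  by apply/fintype.subsetP => w; rewrite !inE => hw; apply: connect_trans hw (connect1 huv).
by exists v; rewrite !inE ?connect0 // (negbTE (acyclic huv)).
Qed.

Lemma connect_source v : connect E r v.
Proof.
elim: {v}(nanc v).+1 {-2}v (ltnSn (nanc v)) => [//|n IH] v hv.
have [->|vr] := eqVneq v r; first exact: connect0.
have : ~~ [forall u, ~~ E u v] by rewrite source_r.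
rewrite negb_forall => /existsP [u]; rewrite negbK => huv.
apply: connect_trans (IH u _) (connect1 huv).
exact: leq_trans (nanc_arc huv) hv.
Qed.

Lemma size_path_le_ndesc x s : path E x s -> (size s <= ndesc x)%N.
Proof.
elim: s x => [//|y s IH] x /= /andP [hxy hp].
by apply: leq_trans (ndesc_arc hxy); rewrite ltnS; apply: IH.
Qed.

Lemma size_path_le_card x s : path E x s -> (size s <= #|V|)%N.
Proof. by move/size_path_le_ndesc/leq_trans; apply; apply: max_card. Qed.

End Dag.

Lemma path_zip_rel (T : eqType) (e : rel T) x s :
  path e x s -> forall a, a \in zip (x :: s) s -> e a.1 a.2.
Proof.
elim: s x => [//|y s IH] x /= /andP [hxy hp] a.
by rewrite inE => /orP [/eqP -> //|]; apply: IH.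
Qed.

Lemma zip_cons_belast (T : Type) (x : T) s : zip (x :: s) s = zip (belast x s) s.
Proof. by elim: s x => [//|y s IH] x /=; rewrite IH. Qed.

Lemma size_path_arcs (V : finType) (r : V) s : size (path_arcs r s) = size s.
Proof. by rewrite /path_arcs size_zip /=; apply/minn_idPr. Qed.

Lemma path_arcs_rcons (V : finType) (r : V) s v :
  path_arcs r (rcons s v) = rcons (path_arcs r s) (last r s, v).
Proof.
by rewrite /path_arcs !zip_cons_belast belast_rcons lastI zip_rcons // size_belast.
Qed.

Section EntropyTerms.
Variable R : realType.

Lemma ln_1div (x : R) : 0 < x -> ln (1 / x) = - ln x.
Proof. by move=> x_gt0; rewrite div1r lnV // posrE. Qed.

Lemma sum_etaD (V : finType) (theta : V -> V -> R) (l : seq (V * V)) :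
  (forall a, a \in l -> 0 < theta a.1 a.2) ->
  \sum_(a <- l) etaD theta a.1 a.2 = (size l)%:R + ln (1 / \prod_(a <- l) theta a.1 a.2).
Proof.
elim: l => [|a l IH] th_gt0; first by rewrite !big_nil divr1 ln1 addr0.
have ha : 0 < theta a.1 a.2 by apply: th_gt0; rewrite inE eqxx.
have hl b : b \in l -> 0 < theta b.1 b.2 by move=> hb; apply: th_gt0; rewrite inE hb orbT.
have hP : 0 < \prod_(b <- l) theta b.1 b.2.
  by rewrite big_seq; apply: prodr_gt0 => b /hl.
rewrite !big_cons IH // /etaD !ln_1div ?mulr_gt0 // lnM ?posrE //= -nat1r.
lra.
Qed.

Lemma xlnx_div_ge0 (a b : R) : 0 < a -> 0 < b -> 0 <= a * ln (a / b) + b - a.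
Proof.
move=> a_gt0 b_gt0.
have ln_le : ln (1 + (b / a - 1)) <= b / a - 1 by apply: le_ln1Dx; rewrite ltrBrDl subrr divr_gt0.
rewrite addrC subrK in ln_le.
have -> : ln (a / b) = - ln (b / a) by rewrite !ln_div ?posrE //; lra.
have ab : a * (b / a) = b by rewrite mulrC divfK // gt_eqF.
nra.
Qed.

End EntropyTerms.

Section Potential.
Variables (R : realType) (V : finType) (E : rel V) (X : {set V}) (r : V).
Variable theta : V -> V -> R.
Hypothesis acyclic : forall u v, E u v -> ~~ connect E v u.
Hypothesis source_r : forall v, [forall u, ~~ E u v] = (v == r).
Hypothesis sinks_X : forall v, (v \in X) = [forall w, ~~ E v w].
Hypothesis theta_gt0 : forall u v, E u v -> 0 < theta u v.
Hypothesis theta_sum1 : forall u, u \notin X -> \sum_(v | E u v) theta u v = 1.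

Lemma theta_le1 u v : E u v -> theta u v <= 1.
Proof.
move=> huv; rewrite -(theta_sum1 (arc_notin_sinks sinks_X huv)) (bigD1 v) //= lerDl.
by apply: sumr_ge0 => w /andP [hw _]; apply/ltW/theta_gt0.
Qed.

Lemma etaD_ge1 u v : E u v -> 1 <= etaD theta u v.
Proof.
move=> huv; rewrite /etaD ln_1div ?theta_gt0 // lerDl oppr_ge0.
exact/ln_le0/theta_le1.
Qed.

Definition eta_length s := \sum_(a <- path_arcs r s) etaD theta a.1 a.2.

Lemma eta_lengthE s :
  path E r s -> eta_length s = (size s)%:R + ln (1 / theta_path r theta s).
Proof.
move=> hp; rewrite /eta_length sum_etaD ?size_path_arcs // => a.
by move/(path_zip_rel hp)/theta_gt0.
Qed.

Lemma eta_length_ge0 s : path E r s -> 0 <= eta_length s.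
Proof.
move=> hp; rewrite /eta_length big_seq; apply: sumr_ge0 => a.
by move/(path_zip_rel hp)/etaD_ge1; apply: le_trans.
Qed.

Lemma eta_length_rcons s v : eta_length (rcons s v) = eta_length s + etaD theta (last r s) v.
Proof. by rewrite /eta_length path_arcs_rcons big_rcons. Qed.

Lemma eta_length_bounded : exists K, forall s, path E r s -> eta_length s <= K.
Proof.
pose K := \sum_u \sum_v `|etaD theta u v|.
have etaD_leK u v : etaD theta u v <= K.
  apply: le_trans (ler_norm _) _.
  rewrite /K (bigD1 u) //= (bigD1 v) //= -addrA lerDl.
  by apply: addr_ge0; apply: sumr_ge0 => w _ //; apply: sumr_ge0.
exists (#|V|%:R * K) => s hp.
have K_ge0 : 0 <= K by apply: sumr_ge0 => u _; apply: sumr_ge0.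
have size_le : (size s)%:R <= #|V|%:R :> R.
  by rewrite ler_nat (size_path_le_card acyclic hp).
apply: le_trans (ler_wpM2r K_ge0 size_le).
rewrite -(size_path_arcs r) -sum1_size natr_sum mulr_suml.
by apply: ler_sum => a _; rewrite mul1r.
Qed.

Definition paths_to v := [set s | path E r s /\ last r s = v]%classic.

Definition potential v := sup (eta_length @` paths_to v)%classic.

Lemma potential_has_ubound v : has_ubound (eta_length @` paths_to v)%classic.
Proof.
by have [K hK] := eta_length_bounded; exists K => _ [s [hp _] <-]; apply: hK.
Qed.

Lemma potential_ge_length s : path E r s -> eta_length s <= potential (last r s).
Proof. by move=> hp; apply: (ub_le_sup (potential_has_ubound _)); exists s. Qed.

Lemma paths_to_neq0 v : (eta_length @` paths_to v !=set0)%classic.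
Proof.
have /connectP [s hp hl] := connect_source acyclic source_r v.
by exists (eta_length s), s.
Qed.

Lemma potential_ge0 v : 0 <= potential v.
Proof.
have [_ [s [hp <-] _]] := paths_to_neq0 v.
exact: le_trans (eta_length_ge0 hp) (potential_ge_length hp).
Qed.

Lemma potential_arc u v : E u v -> potential u + etaD theta u v <= potential v.
Proof.
move=> huv; rewrite -lerBrDr; apply: ge_sup; first exact: paths_to_neq0.
move=> _ [s [hp hl] <-]; rewrite lerBrDr -hl -eta_length_rcons.
have := @potential_ge_length (rcons s v); rewrite last_rcons rcons_path hp hl huv.
by apply.
Qed.

Lemma potential_sink x : x \in X -> potential x <= @Delta0 R V E X r + DeltaI E X r theta.
Proof.
move=> hx; apply: ge_sup; first exact: paths_to_neq0.
move=> _ [s [hp hl] <-].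
have hs : rpath E X r s by rewrite /rpath hp hl hx.
have [K hK] := eta_length_bounded.
rewrite eta_lengthE //; apply: lerD.
  apply: ub_le_sup; last by exists s.
  by exists #|V|%:R => _ [t [/andP [ht _] ->]]; rewrite ler_nat (size_path_le_card acyclic ht).
apply: ub_le_sup; last by exists s.
exists K => _ [t [/andP [ht _] ->]]; have := hK t ht; rewrite eta_lengthE //.
have : 0 <= (size t)%:R :> R by []; lra.
Qed.

End Potential.

Section StepMap.
Variables (R : realType) (V : finType) (E : rel V) (X : {set V}).
Variables (kappa : R) (omega theta : V -> V -> R).

Lemma Du_self u (f : V -> R) : Du E kappa omega theta u f f = 0.
Proof.
rewrite /Du big1 ?mulr0 // => v _.
set a := f v + _.
suff -> : a * ln (a / a) = 0 by rewrite add0r subrr mulr0.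
by have [->|a_neq0] := eqVneq a 0; rewrite ?mul0r // divff // ln1 mulr0.
Qed.

Lemma Du_ge0 u (f g : V -> R) :
  0 < kappa -> (forall v, E u v -> 0 < omega u v) -> (forall v, E u v -> 0 < theta u v) ->
  (forall v, E u v -> 1 <= etaD theta u v) ->
  (forall v, E u v -> 0 <= f v) -> (forall v, E u v -> 0 <= g v) ->
  0 <= Du E kappa omega theta u f g.
Proof.
move=> kappa_gt0 omega_gt0 theta_gt0 etaD_ge1 f_ge0 g_ge0.
apply: mulr_ge0; first by rewrite invr_ge0 ltW.
apply: sumr_ge0 => v huv.
have eta_ge1 := etaD_ge1 v huv.
have delta_gt0 : 0 < deltaD theta u v by rewrite divr_gt0 ?theta_gt0 //; lra.
apply: mulr_ge0; first by rewrite divr_ge0 ?ltW ?omega_gt0 //; lra.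
have := @xlnx_div_ge0 R (f v + deltaD theta u v) (g v + deltaD theta u v).
have := f_ge0 v huv; have := g_ge0 v huv.
move=> hg hf h; have := h ltac:(lra) ltac:(lra); lra.
Qed.

Variables (r : V) (q p : V -> V -> R) (c chat : V -> R).
Hypothesis dag : is_dag_over E X r.
Hypothesis marking : is_marking E X omega theta.
Hypothesis kappa_gt0 : 0 < kappa.
Hypothesis q_in_QD : in_QD E X q.
Hypothesis c_ge0 : forall x, x \in X -> 0 <= c x.
Hypothesis step : is_step E X kappa omega theta q c p chat.

Lemma step_le_mean u : u \notin X -> chat u <= \sum_(v | E u v) q u v * chat v.
Proof.
move=> hu; have [[p_ge0 _] p_opt ->] := step.2 u hu.
case: dag => _ _ sinks_X; case: marking => omega_gt0 _ theta_gt0 theta_sum1.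
have := p_opt _ (conj (q_in_QD.1 u) (q_in_QD.2 u hu)).
rewrite /step_obj Du_self add0r.
have : 0 <= Du E kappa omega theta u (p u) (q u).
  apply: Du_ge0 => // v.
  - exact: omega_gt0.
  - exact: theta_gt0.
  - exact: etaD_ge1 sinks_X theta_gt0 theta_sum1 u v.
  - exact: q_in_QD.1.
lra.
Qed.

Lemma step_ge0 v : 0 <= chat v.
Proof.
case: dag => acyclic _ _.
elim: {v}(ndesc E v).+1 {-2}v (ltnSn (ndesc E v)) => [//|n IH] v hv.
have [vX|vX] := boolP (v \in X); first by rewrite step.1 ?c_ge0.
have [[p_ge0 _] _ ->] := step.2 v vX.
apply: sumr_ge0 => w hw; apply: mulr_ge0; first exact: p_ge0.
by apply: IH; apply: leq_trans (ndesc_arc acyclic hw) hv.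
Qed.

Lemma Lambda_outflow_ge (Q : V -> V -> R) u : is_Lambda E X r q Q -> u \notin X ->
  flow_at E X Q u * chat u <= \sum_(v | E u v) Q u v * chat v.
Proof.
move=> [[[Q_ge0 _] _] Q_mul] hu.
have -> : \sum_(v | E u v) Q u v * chat v = flow_at E X Q u * \sum_(v | E u v) q u v * chat v.
  by rewrite mulr_sumr; apply: eq_bigr => v huv; rewrite Q_mul // mulrA.
apply: (ler_wpM2l _ (step_le_mean hu)).
by rewrite /flow_at (negbTE hu); apply: sumr_ge0 => v; apply: Q_ge0.
Qed.

End StepMap.

Section FlowTelescoping.
Variables (R : realType) (V : finType) (E : rel V) (X : {set V}) (r : V).

Lemma sum_arcs_potential_diff (H : V -> R) (g : V -> V -> R) :
  \sum_u \sum_(v | E u v) (H v - H u) * g u v =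
  \sum_v H v * \sum_(u | E u v) g u v - \sum_u H u * \sum_(v | E u v) g u v.
Proof.
under eq_bigr do rewrite (eq_bigr _ (fun v _ => mulrBl _ _ _)) sumrB -mulr_sumr.
rewrite sumrB; congr (_ - _).
rewrite (exchange_big_dep xpredT) //=; apply: eq_bigr => v _.
by rewrite mulr_sumr.
Qed.

Variable Q : V -> V -> R.
Hypothesis Q_flow : is_flow E X r Q.
Hypothesis source_r : forall u, ~~ E u r.

Lemma flow_in_le_out v : v \notin X -> \sum_(u | E u v) Q u v <= \sum_(w | E v w) Q v w.
Proof.
case: Q_flow => Q_ge0 Q_cons hv.
have [->|vr] := eqVneq v r; last by rewrite Q_cons.
by rewrite big_pred0 => [|u]; [apply: sumr_ge0 => w; apply: Q_ge0 | apply/negbTE].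
Qed.

Lemma flow_potential_telescope (H g : V -> R) :
  (forall v, 0 <= H v) -> (forall v, 0 <= g v) ->
  (forall u, u \notin X -> flow_at E X Q u * g u <= \sum_(v | E u v) Q u v * g v) ->
  \sum_u \sum_(v | E u v) (H v - H u) * (Q u v * g v) <=
  \sum_(x in X) H x * g x * flow_at E X Q x.
Proof.
move=> H_ge0 g_ge0 g_mean; case: Q_flow => Q_ge0 _.
rewrite sum_arcs_potential_diff -sumrB [leRHS]big_mkcond /=.
apply: ler_sum => v _; rewrite -mulrBr.
have -> : \sum_(u | E u v) Q u v * g v = g v * \sum_(u | E u v) Q u v.
  by rewrite mulr_sumr; apply: eq_bigr => u _; rewrite mulrC.
case: ifP => [vX|/negbT vX].
  rewrite -[H v * g v * _]mulrA /flow_at vX; apply: (ler_wpM2l (H_ge0 v)).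
  rewrite gerBl; apply: sumr_ge0 => w hw.
  by rewrite mulr_ge0 ?Q_ge0.
apply: mulr_ge0_le0 (H_ge0 v) _; rewrite subr_le0.
apply: le_trans (g_mean v vX); rewrite /flow_at (negbTE vX) mulrC.
exact: (ler_wpM2r (g_ge0 v) (flow_in_le_out vX)).
Qed.

End FlowTelescoping.

Theorem lemma4p11 (R : realType) (V : finType) (E : rel V) (X : {set V}) (r : V)
    (omega theta : V -> V -> R) (kappa : R) (q : V -> V -> R) (c : V -> R)
    (p : V -> V -> R) (chat : V -> R) (Q : V -> V -> R) :
  @is_dag_over V E X r ->
  @is_marking R V E X omega theta ->
  0 < kappa ->
  @in_QD R V E X q ->
  (forall x, x \in X -> 0 <= c x) ->
  @is_step R V E X kappa omega theta q c p chat ->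
  @is_Lambda R V E X r q Q ->
  \sum_(u : V) \sum_(v | E u v) @etaD R V theta u v * Q u v * chat v
    <= (@Delta0 R V E X r + @DeltaI R V E X r theta) * \sum_(x in X) c x * @flow_at R V E X Q x.
Proof.
move=> dag marking kappa_gt0 q_in_QD c_ge0 step Lambda.
have [acyclic source_r sinks_X] := dag; have [_ _ theta_gt0 theta_sum1] := marking.
have [[Q_flow _] _] := Lambda; have [Q_ge0 _] := Q_flow.
have chat_ge0 := step_ge0 dag c_ge0 step.
set H := potential E r theta.
have H_ge0 := potential_ge0 acyclic source_r sinks_X theta_gt0 theta_sum1.
apply: (@le_trans _ _ (\sum_u \sum_(v | E u v) (H v - H u) * (Q u v * chat v))).
  apply: ler_sum => u _; apply: ler_sum => v huv; rewrite mulrA.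
  apply: ler_wpM2r; first exact: chat_ge0.
  apply: ler_wpM2r; first exact: Q_ge0.
  by rewrite lerBrDr addrC (potential_arc theta acyclic source_r huv).
apply: le_trans (flow_potential_telescope Q_flow (source_no_arc source_r) H_ge0 chat_ge0
  (fun u => Lambda_outflow_ge dag marking kappa_gt0 q_in_QD step Lambda)) _.
rewrite mulr_sumr; apply: ler_sum => x hx.
rewrite step.1 // -mulrA; apply: (ler_wpM2r _ (potential_sink acyclic source_r theta_gt0 hx)).
apply: mulr_ge0; first exact: c_ge0.
by rewrite /flow_at hx; apply: sumr_ge0 => w; apply: Q_ge0.
Qed.
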